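(* Let $\pi\colon\mathsf{States}\to\mathbb{R}_{\ge0}$ be a potential function, let $C$ be a program and let $f,g\in\mathbb{T}$. If $\mathrm{mod}(C)\cap\mathrm{Vars}(g)=\emptyset$, then $$\mathsf{aert}_\pi[\![C]\!]\big((f\oplus g)-\pi\big)\;\preceq\;\Big(\big(\mathsf{aert}_\pi[\![C]\!](f-\pi)+\pi\big)\oplus g\Big)-\pi .$$
   Context: States and programs. Fix a finite set $\mathrm{Vars}$ of variables; values are $\mathbb{N}$, locations are $\mathbb{N}_{>0}$. A stack is $s\colon \mathrm{Vars}\to\mathbb{N}$; a heap is a partial map $h$ from a finite set $\mathrm{dom}(h)\subseteq\mathbb{N}_{>0}$ to $\mathbb{N}$. $h_1\perp h_2$ means disjoint domains; then $h_1\star h_2$ is their union; $h_\emptyset$ is the empty heap. $\mathsf{States}$ is the set of pairs $(s,h)$. $s(e)$ is the value of a (heap-independent) arithmetic expression $e$ under $s$, $s\models\varphi$ means the Boolean expression $\varphi$ holds under $s$, $s[x\mapsto v]$ is the updated stack. Programs are generated by $C ::= \mathtt{tick}(e) \mid x:=e \mid x:=\mathtt{alloc}(e) \mid \langle e\rangle:=e' \mid x:=\langle e\rangle \mid \mathtt{free}(e) \mid \{C\}[p]\{C\} \mid \mathtt{if}(\varphi)\{C\}\mathtt{else}\{C\} \mid C;C \mid \mathtt{while}(\varphi)\{C\}$, where $p$ is an expression with $s(p)\in[0,1]\cap\mathbb{Q}$ for all $s$. The statements other than tick, probabilistic choice, conditional, sequencing and loops are called atomic. $\mathrm{mod}(C)$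 is the set of variables potentially modified by $C$, i.e. the variables $x$ occurring as the target of $x:=e$, $x:=\mathtt{alloc}(e)$ or $x:=\langle e\rangle$ in $C$. For a runtime $g$, $x\notin\mathrm{Vars}(g)$ means $g(s[x\mapsto v],h)=g(s,h)$ for all $(s,h)$ and $v$. Runtimes. $\mathbb{T}$ is the set of functions $\mathsf{States}\to[0,\infty]$, ordered pointwise by $\preceq$; arithmetic is pointwise with $0\cdot\infty=0$. $[\varphi]$ is the $0/1$-valued Iverson bracket. Truncated subtraction: $a\dot- b=\max(a-b,0)$, $\infty\dot- b=\infty$ for finite $b$, $a\dot-\infty=0$. Separating sum $(f\oplus g)(s,h)=\min\{f(s,h_1)+g(s,h_2)\mid h=h_1\star h_2\}$ (also applied to nonnegative functions with values in $[0,\infty]$); $(f \mathbin{-\!\!\ominus} g)(s,h)=\sup\{g(s,h\star h')\dot- f(s,h')\mid h'\perp h\}$; $(\inf y\colon f)(s,h)=\inf_{v\in\mathbb{N}} f(s[y\mapsto v],h)$, $(\sup y\colon f)(s,h)=\sup_{v\in\mathbb{N}}f(s[y\mapsto v],h)$; $f[x/e](s,h)=f(s[x\mapsto s(e)],h)$. $\mathsf{tm}(e)(s,h)=s(e)$ if $h=h_\emptyset$, else $\infty$; $[e\mapsto e'](s,h)=0$ if $\mathrm{dom}(h)=\{s(e)\}$ and $h(s(e))=s(e')$, else $\infty$; $[e\mapsto -](s,h)=0$ if $\mathrm{dom}(h)=\{s(e)\}$, else $\infty$; $\bigoplus_{i=1}^{e} f_i$ is the separating sum over $i=1,\dots,s(e)$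 (empty one: $[\mathsf{emp}]$, which is $0$ if $h=h_\emptyset$, else $\infty$). $\mathsf{ert}[\![C]\!]\colon\mathbb{T}\to\mathbb{T}$ (with $v$ fresh): $\mathsf{ert}[\![\mathtt{tick}(e)]\!](f)=\mathsf{tm}(e)\oplus f$; $\mathsf{ert}[\![x:=e]\!](f)=f[x/e]$; $\mathsf{ert}[\![x:=\mathtt{alloc}(e)]\!](f)=\sup v\colon (\bigoplus_{i=1}^{e}[v+i-1\mapsto 0])\mathbin{-\!\!\ominus} f[x/v]$; $\mathsf{ert}[\![\langle e\rangle:=e']\!](f)=[e\mapsto-]\oplus([e\mapsto e']\mathbin{-\!\!\ominus} f)$; $\mathsf{ert}[\![x:=\langle e\rangle]\!](f)=\inf v\colon [e\mapsto v]\oplus([e\mapsto v]\mathbin{-\!\!\ominus} f[x/v])$; $\mathsf{ert}[\![\mathtt{free}(e)]\!](f)=[e\mapsto-]\oplus f$; $\mathsf{ert}[\![C_1;C_2]\!](f)=\mathsf{ert}[\![C_1]\!](\mathsf{ert}[\![C_2]\!](f))$; conditional: $[\varphi]\cdot\mathsf{ert}[\![C_1]\!](f)+[\neg\varphi]\cdot\mathsf{ert}[\![C_2]\!](f)$; probabilistic choice: $p\cdot\mathsf{ert}[\![C_1]\!](f)+(1-p)\cdot\mathsf{ert}[\![C_2]\!](f)$; $\mathsf{ert}[\![\mathtt{while}(\varphi)\{C\}]\!](f)=\mathrm{lfp}\, g.\ [\neg\varphi]\cdot f+[\varphi]\cdot\mathsf{ert}[\![C]\!](g)$. Amortized runtimes.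 A potential function is $\pi\colon\mathsf{States}\to\mathbb{R}_{\ge0}$. $\mathbb{A}_\pi=\{X\colon\mathsf{States}\to\mathbb{R}\cup\{\infty\}\mid -\pi\le X\}$, ordered pointwise (complete lattice, least element $-\pi$). $\mathsf{aert}_\pi[\![C]\!]\colon\mathbb{A}_\pi\to\mathbb{A}_\pi$: $\mathsf{aert}_\pi[\![\mathtt{tick}(e)]\!](X)=e+X$; for atomic $C$ other than tick, $\mathsf{aert}_\pi[\![C]\!](X)=\mathsf{ert}[\![C]\!](X+\pi)-\pi$; sequencing by composition; conditional $[\varphi]\cdot\mathsf{aert}_\pi[\![C_1]\!](X)+[\neg\varphi]\cdot\mathsf{aert}_\pi[\![C_2]\!](X)$; probabilistic choice $p\cdot\mathsf{aert}_\pi[\![C_1]\!](X)+(1-p)\cdot\mathsf{aert}_\pi[\![C_2]\!](X)$; $\mathsf{aert}_\pi[\![\mathtt{while}(\varphi)\{C'\}]\!](X)=\mathrm{lfp}\,Y.\ [\neg\varphi]\cdot X+[\varphi]\cdot\mathsf{aert}_\pi[\![C']\!](Y)$ in $(\mathbb{A}_\pi,\preceq)$. *)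

From HB Require Import structures.
From mathcomp Require Import all_boot all_order all_algebra.
From mathcomp Require Import finmap.
From mathcomp Require Import classical_sets reals constructive_ereal ereal.
Set Implicit Arguments. Unset Strict Implicit. Unset Printing Implicit Defensive.
Import Order.TTheory GRing.Theory Num.Theory.
Local Open Scope ring_scope.
Local Open Scope ereal_scope.
Local Open Scope classical_set_scope.

Record loc := Loc { lval : nat; lval_pos : (0 < lval)%N }.
HB.instance Definition _ := [isSub for lval].
HB.instance Definition _ := [Countable of loc by <:].

Definition heap := {fmap loc -> nat}.
Definition hemp : heap := [fmap]%fmap.
Definition hdisj (h1 h2 : heap) : bool := fdisjoint (domf h1) (domf h2).
Definition hunion (h1 h2 : heap) : heap := catf h1 h2.

Section Semantics.
Variable V : finType.
Variable R : realType.

Definition stack := V -> nat.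
Definition state := (stack * heap)%type.
Definition upd (s : stack) (x : V) (v : nat) : stack :=
  fun y => if y == x then v else s y.

Definition aexp := stack -> nat.
Definition bexp := stack -> bool.
Definition pexp := {p : stack -> rat | forall s, (0 <= p s <= 1)%R}.
Definition pval (p : pexp) (s : stack) : rat := proj1_sig p s.

Inductive prog : Type :=
| Tick of aexp
| Assign of V & aexp
| Alloc of V & aexp
| Store of aexp & aexp                 (* <e> := e' *)
| Lookup of V & aexp                     (* x := <e> *)
| Free of aexp
| PChoice of prog & pexp & prog        (* {C1}[p]{C2} *)
| Ite of bexp & prog & prog
| Seq of prog & prog
| While of bexp & prog.

Fixpoint modv (C : prog) : pred V :=
  match C with
  | Assign x _ | Alloc x _ | Lookup x _ => pred1 x
  | Tick _ | Store _ _ | Free _ => pred0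
  | PChoice C1 _ C2 | Ite _ C1 C2 | Seq C1 C2 => predU (modv C1) (modv C2)
  | While _ C1 => modv C1
  end.

(* Extended-real valued functions on states; runtimes T are the
   nonnegative ones, A_pi those bounded below by -pi. *)
Definition fn := state -> \bar R.
Definition leF (f g : fn) : Prop := forall st, f st <= g st.
Definition isRuntime (f : fn) : Prop := forall st, 0 <= f st.

(* x does not occur in g (semantic). *)
Definition notin_vars (x : V) (g : fn) : Prop :=
  forall s h v, g (upd s x v, h) = g (s, h).

Definition tsub (a b : \bar R) : \bar R :=
  if b == +oo then 0 else if a == +oo then +oo else maxe (a - b) 0.

Definition sepsum (f g : fn) : fn := fun st =>
  ereal_inf [set z | exists h1 h2 : heap,
     [/\ hdisj h1 h2, st.2 = hunion h1 h2 & z = f (st.1, h1) + g (st.1, h2)]].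

Definition sepimp (f g : fn) : fn := fun st =>
  ereal_sup [set tsub (g (st.1, hunion st.2 h')) (f (st.1, h')) |
             h' in [set h' : heap | hdisj h' st.2]].

Definition infv (y : V) (f : fn) : fn := fun st =>
  ereal_inf [set f (upd st.1 y v, st.2) | v in [set: nat]].
Definition supv (y : V) (f : fn) : fn := fun st =>
  ereal_sup [set f (upd st.1 y v, st.2) | v in [set: nat]].
Definition subst (f : fn) (x : V) (e : aexp) : fn := fun st =>
  f (upd st.1 x (e st.1), st.2).

Definition tm (e : aexp) : fn := fun st =>
  if st.2 == hemp then ((e st.1)%:R)%:E else +oo.
Definition emp : fn := fun st => if st.2 == hemp then 0 else +oo.

Definition ptv (l w : nat) : fn := fun st =>
  match insub l with
  | Some k => if (domf st.2 == [fset k]%fset) && (st.2.[? k]%fmap == Some w)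
              then 0 else +oo
  | None => +oo
  end.
Definition ptany (l : nat) : fn := fun st =>
  match insub l with
  | Some k => if domf st.2 == [fset k]%fset then 0 else +oo
  | None => +oo
  end.
Definition pt (e e' : aexp) : fn := fun st => ptv (e st.1) (e' st.1) st.
Definition pt_ (e : aexp) : fn := fun st => ptany (e st.1) st.

Fixpoint bigsep (n : nat) (F : nat -> fn) : fn :=
  match n with
  | 0 => emp
  | n'.+1 => sepsum (bigsep n' F) (F n'.+1)
  end.

(* least fixed point of phi within the sublattice L of (fn, pointwise <=),
   via Knaster--Tarski: pointwise infimum of the prefixed points in L. *)
Definition lfp_in (L : fn -> Prop) (phi : fn -> fn) : fn := fun st =>
  ereal_inf [set Y st | Y in [set Y | L Y /\ leF (phi Y) Y]].

Definition iver (b : bexp) (A B : fn) : fn := fun st =>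
  if b st.1 then A st else B st.

Definition pmix (p : pexp) (A B : fn) : fn := fun st =>
  (ratr (pval p st.1))%:E * A st + (ratr (1 - pval p st.1))%:E * B st.

Fixpoint ert (C : prog) (f : fn) : fn :=
  match C with
  | Tick e => sepsum (tm e) f
  | Assign x e => subst f x e
  | Alloc x e => fun st =>
      ereal_sup [set sepimp (bigsep (e st.1) (fun i st' => ptv (v + i - 1) 0 st'))
                            (fun st' => f (upd st'.1 x v, st'.2)) st
                | v in [set: nat]]
  | Store e e' => sepsum (pt_ e) (sepimp (pt e e') f)
  | Lookup x e => fun st =>
      ereal_inf [set sepsum (fun st' => ptv (e st'.1) v st')
                            (sepimp (fun st' => ptv (e st'.1) v st')
                                    (fun st' => f (upd st'.1 x v, st'.2))) st
                | v in [set: nat]]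
  | Free e => sepsum (pt_ e) f
  | PChoice C1 p C2 => pmix p (ert C1 f) (ert C2 f)
  | Ite b C1 C2 => iver b (ert C1 f) (ert C2 f)
  | Seq C1 C2 => ert C1 (ert C2 f)
  | While b C1 => lfp_in isRuntime (fun g => iver b (ert C1 g) f)
  end.

Section Aert.
Variable pi : state -> R.
Definition addpi (X : fn) : fn := fun st => X st + (pi st)%:E.
Definition subpi (X : fn) : fn := fun st => X st - (pi st)%:E.
Definition inA (X : fn) : Prop := forall st, - (pi st)%:E <= X st.

Fixpoint aert (C : prog) (X : fn) : fn :=
  match C with
  | Tick e => fun st => ((e st.1)%:R)%:E + X st
  | Assign _ _ | Alloc _ _ | Store _ _ | Lookup _ _ | Free _ =>
      subpi (ert C (addpi X))
  | PChoice C1 p C2 => pmix p (aert C1 X) (aert C2 X)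
  | Ite b C1 C2 => iver b (aert C1 X) (aert C2 X)
  | Seq C1 C2 => aert C1 (aert C2 X)
  | While b C1 => lfp_in inA (fun Y => iver b (aert C1 Y) X)
  end.
End Aert.

End Semantics.

(* Shifting by the potential, raert C F := aert C (F - pi) + pi, turns aert into a
   transformer on runtimes, and the theorem says precisely that raert satisfies the
   frame rule raert C (f (+) g) <= raert C f (+) g.  For an atomic command raert is
   ert, and the frame rule follows from the associativity of (+), the
   distributivity of -o over (+), and the fact that g does not read the variables
   the command writes.  The rule is preserved by sequencing (monotonicity), by
   conditionals (guards only read the stack, which (+) leaves alone), by
   probabilistic choice (convex combinations distribute over (+)), and by loops
   (Park induction: raert W f (+) g is a prefixed point of the loop functional for
   f (+) g, since raert W f is one for f). *)

From HB Require Import structures.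
From mathcomp Require Import all_boot all_order all_algebra.
From mathcomp Require Import finmap.
From mathcomp Require Import boolp classical_sets reals constructive_ereal ereal.
Set Implicit Arguments. Unset Strict Implicit. Unset Printing Implicit Defensive.
Import Order.TTheory GRing.Theory Num.Theory.
Local Open Scope ring_scope.
Local Open Scope ereal_scope.

Lemma hdisjC (a b : heap) : hdisj a b = hdisj b a.
Proof. by rewrite /hdisj fdisjoint_sym. Qed.

Lemma hdisjUl (a b c : heap) : hdisj (hunion a b) c = hdisj a c && hdisj b c.
Proof. by rewrite /hdisj /hunion domf_cat fdisjointUX. Qed.

Lemma hdisjUr (a b c : heap) : hdisj a (hunion b c) = hdisj a b && hdisj a c.
Proof. by rewrite /hdisj /hunion domf_cat fdisjointXU. Qed.

Lemma hunionA (a b c : heap) : hunion a (hunion b c) = hunion (hunion a b) c.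
Proof. by rewrite /hunion catfA. Qed.

Lemma hunionC (a b : heap) : hdisj a b -> hunion a b = hunion b a.
Proof. by move=> dab; rewrite /hunion disjoint_catfC. Qed.

Lemma hdisj0h (a : heap) : hdisj hemp a.
Proof. by rewrite /hdisj /hemp domf0 fdisjoint0X. Qed.

Section TruncatedSubtraction.
Variable R : realType.
Implicit Types a b c : \bar R.

Lemma tsub_ge0 a b : 0 <= tsub a b.
Proof. by rewrite /tsub; do 2?case: ifP => _; rewrite ?leey ?le_max ?lexx ?orbT. Qed.

Lemma le_tsub a a' b : a <= a' -> tsub a b <= tsub a' b.
Proof.
rewrite /tsub => aa'; case: ifP => // _.
case: ifP => [/eqP ay|_].
  by move: aa'; rewrite ay !leye_eq => /eqP ->; rewrite !eqxx.
case: ifP => _; first exact: leey.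
by rewrite ge_max !le_max lexx orbT (leeB aa' (lexx b)).
Qed.

Lemma tsubD_le a b c : 0 <= c -> tsub (a + c) b <= tsub a b + c.
Proof.
case: c => [c| |//] c0; last first.
  by rewrite [X in _ <= X]addey ?leey // gt_eqF // (lt_le_trans ltNy0 (tsub_ge0 a b)).
rewrite /tsub; case: ifP => _; first by rewrite add0e.
case: a => [a| |] /=; rewrite ?leey // ge_max [X in X <= _]addeAC.
all: apply/andP; split; first by apply: leeD2r; rewrite le_max lexx.
all: by apply: adde_ge0; rewrite // le_max lexx orbT.
Qed.

Lemma le_ereal_inf_addr (S : set (\bar R)) x c :
  0 <= c -> (forall y, S y -> 0 <= y) -> (forall y, S y -> x <= y + c) ->
  x <= ereal_inf S + c.
Proof.
case: c => [c| |//] c0 S0 Sx; last first.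
  have inf0 : 0 <= ereal_inf S by apply: le_ereal_inf_tmp.
  by rewrite addey ?leey // gt_eqF // (lt_le_trans ltNy0 inf0).
rewrite -leeBlDr //; apply: le_ereal_inf_tmp => y Sy; rewrite leeBlDr //; exact: Sx.
Qed.

End TruncatedSubtraction.

Section Separation.
Variables (V : finType) (R : realType).
Implicit Types (F G P Q f g : fn V R) (st : state V) (h : heap).

Lemma sepsum_le F G st h1 h2 : hdisj h1 h2 -> st.2 = hunion h1 h2 ->
  sepsum F G st <= F (st.1, h1) + G (st.1, h2).
Proof. by move=> d e; apply: ereal_inf_lbound; exists h1, h2. Qed.

Lemma sepsum_ge F G st x :
  (forall h1 h2, hdisj h1 h2 -> st.2 = hunion h1 h2 -> x <= F (st.1, h1) + G (st.1, h2)) ->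
  x <= sepsum F G st.
Proof. by move=> x_le; apply: le_ereal_inf_tmp => _ [h1 [h2 [d e ->]]]; apply: x_le. Qed.

Lemma le_sepsum F F' G G' st :
  (forall h, F (st.1, h) <= F' (st.1, h)) -> (forall h, G (st.1, h) <= G' (st.1, h)) ->
  sepsum F G st <= sepsum F' G' st.
Proof.
move=> FF' GG'; apply: sepsum_ge => h1 h2 d e.
exact: le_trans (sepsum_le F G d e) (leeD (FF' h1) (GG' h2)).
Qed.

Lemma sepsum_ge0 F G st :
  (forall h, 0 <= F (st.1, h)) -> (forall h, 0 <= G (st.1, h)) -> 0 <= sepsum F G st.
Proof. by move=> F0 G0; apply: sepsum_ge => h1 h2 _ _; apply: adde_ge0. Qed.

Lemma sepimp_ge P F st h' : hdisj h' st.2 ->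
  tsub (F (st.1, hunion st.2 h')) (P (st.1, h')) <= sepimp P F st.
Proof. by move=> d; apply: ereal_sup_ubound; exists h'. Qed.

Lemma sepimp_le P F st x :
  (forall h', hdisj h' st.2 -> tsub (F (st.1, hunion st.2 h')) (P (st.1, h')) <= x) ->
  sepimp P F st <= x.
Proof. by move=> le_x; apply: ge_ereal_sup => _ [h' d <-]; apply: le_x. Qed.

Lemma sepimp_ge0 P F st : 0 <= sepimp P F st.
Proof. exact: le_trans (tsub_ge0 _ _) (sepimp_ge P F (hdisj0h _)). Qed.

Lemma le_sepimp P F F' st :
  (forall h, F (st.1, h) <= F' (st.1, h)) -> sepimp P F st <= sepimp P F' st.
Proof.
move=> FF'; apply: sepimp_le => h' d.
exact: le_trans (le_tsub _ (FF' _)) (sepimp_ge P F' d).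
Qed.

Lemma sepsumA_le P F G st :
  (forall h, 0 <= P (st.1, h)) -> (forall h, 0 <= F (st.1, h)) ->
  (forall h, 0 <= G (st.1, h)) ->
  sepsum P (sepsum F G) st <= sepsum (sepsum P F) G st.
Proof.
move=> P0 F0 G0; apply: sepsum_ge => h12 h3 d12_3 e.
apply: le_ereal_inf_addr => [||_ [h1 [h2 [d12 /= e12 ->]]]]; first exact: G0.
  by move=> _ [h1 [h2 [_ _ ->]]]; apply: adde_ge0.
move: d12_3; rewrite e12 hdisjUl => /andP[d13 d23].
have d1_23 : hdisj h1 (hunion h2 h3) by rewrite hdisjUr d12 d13.
have e1_23 : st.2 = hunion h1 (hunion h2 h3) by rewrite e e12 hunionA.
apply: le_trans (sepsum_le P (sepsum F G) d1_23 e1_23) _.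
by rewrite -addeA; apply: leeD2l; apply: sepsum_le d23 _.
Qed.

Lemma sepimp_sepsum_le P F G st : (forall h, 0 <= G (st.1, h)) ->
  sepimp P (sepsum F G) st <= sepsum (sepimp P F) G st.
Proof.
move=> G0; apply: sepsum_ge => h1 h2 d e; apply: sepimp_le => h' d'.
move: d'; rewrite e hdisjUr => /andP[d'1 d'2].
have d1'2 : hdisj (hunion h1 h') h2 by rewrite hdisjUl d d'2.
have -> : hunion (hunion h1 h2) h' = hunion (hunion h1 h') h2.
  by rewrite -hunionA (@hunionC h2 h') ?hunionA // hdisjC.
have := sepsum_le F G (st := (st.1, hunion (hunion h1 h') h2)) d1'2 erefl.
move=> /(le_tsub (P (st.1, h'))) /le_trans; apply.
apply: le_trans (tsubD_le _ _ (G0 _)) _; apply: leeD2r.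
exact: (sepimp_ge P F (st := (st.1, h1)) d'1).
Qed.

Lemma sepsum_sepimp_frame P Q F G st :
  (forall h, 0 <= P (st.1, h)) -> (forall h, 0 <= G (st.1, h)) ->
  sepsum P (sepimp Q (sepsum F G)) st <= sepsum (sepsum P (sepimp Q F)) G st.
Proof.
move=> P0 G0; apply: le_trans _ (sepsumA_le P0 (fun h => sepimp_ge0 Q F _) G0).
by apply: le_sepsum => h //; apply: sepimp_sepsum_le.
Qed.

Lemma sepsum_upd_le F g x s v h : notin_vars x g ->
  sepsum F g (upd s x v, h) <= sepsum (fun st => F (upd st.1 x v, st.2)) g (s, h).
Proof.
move=> xg; apply: sepsum_ge => h1 h2 d e /=.
by rewrite -(xg s h2 v); apply: sepsum_le.
Qed.

Lemma ereal_inf_sepsum_le (I : Type) (X : I -> fn V R) G st :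
  (forall i h, 0 <= X i (st.1, h)) -> (forall h, 0 <= G (st.1, h)) ->
  ereal_inf [set sepsum (X i) G st | i in [set: I]]
  <= sepsum (fun st' => ereal_inf [set X i st' | i in [set: I]]) G st.
Proof.
move=> X0 G0; apply: sepsum_ge => h1 h2 d e.
apply: le_ereal_inf_addr => [||_ [i _ <-]]; [exact: G0|by move=> _ [i _ <-]|].
by apply: le_trans (sepsum_le (X i) G d e); apply: ereal_inf_lbound; exists i.
Qed.

End Separation.

Section Combinators.
Variables (V : finType) (R : realType).
Implicit Types (F G X Y f g : fn V R) (st : state V) (p : pexp V).

Lemma addl_sepsum_le (c : stack V -> \bar R) F G :
  leF (fun st => c st.1 + sepsum F G st) (sepsum (fun st => c st.1 + F st) G).
Proof.
move=> st; apply: sepsum_ge => h1 h2 d e /=.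
by rewrite -addeA; apply: leeD2l; apply: sepsum_le.
Qed.

Lemma iver_sepsum (b : bexp V) X Y G :
  sepsum (iver b X Y) G = iver b (sepsum X G) (sepsum Y G).
Proof. by apply/funext => -[s h]; rewrite /iver /sepsum /=; case: (b s). Qed.

Lemma le_iver (b : bexp V) (X X' Y Y' : fn V R) :
  leF X X' -> leF Y Y' -> leF (iver b X Y) (iver b X' Y').
Proof. by move=> XX' YY' st; rewrite /iver; case: ifP => _; [exact: XX'|exact: YY']. Qed.

Lemma pval_ge0 p s : (0 <= ratr (pval p s) :> R)%R.
Proof. by rewrite ler0q; case/andP: (proj2_sig p s). Qed.

Lemma pvalC_ge0 p s : (0 <= ratr (1 - pval p s) :> R)%R.
Proof. by rewrite ler0q subr_ge0; case/andP: (proj2_sig p s). Qed.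

Lemma pval_addC p s : (ratr (pval p s) + ratr (1 - pval p s) = 1 :> R)%R.
Proof. by rewrite rmorphB rmorph1 addrC subrK. Qed.

Lemma le_pmix p (X X' Y Y' : fn V R) :
  leF X X' -> leF Y Y' -> leF (pmix p X Y) (pmix p X' Y').
Proof.
move=> XX' YY' st; apply: leeD; apply: lee_wpmul2l;
  by rewrite ?lee_fin ?pval_ge0 ?pvalC_ge0 ?XX' ?YY'.
Qed.

Lemma pmix_ge0 p X Y : isRuntime X -> isRuntime Y -> isRuntime (pmix p X Y).
Proof.
by move=> X0 Y0 st; apply: adde_ge0; apply: mule_ge0; rewrite ?lee_fin ?pval_ge0 ?pvalC_ge0.
Qed.

Lemma pmix_sepsum_le p X Y G : isRuntime X -> isRuntime Y -> isRuntime G ->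
  leF (pmix p (sepsum X G) (sepsum Y G)) (sepsum (pmix p X Y) G).
Proof.
move=> X0 Y0 G0 [s h]; apply: sepsum_ge => h1 h2 d e /=.
have w0 : 0 <= (ratr (pval p s))%:E :> \bar R by rewrite lee_fin pval_ge0.
have w0' : 0 <= (ratr (1 - pval p s))%:E :> \bar R by rewrite lee_fin pvalC_ge0.
apply: le_trans (leeD (lee_wpmul2l w0 (sepsum_le X G d e))
                      (lee_wpmul2l w0' (sepsum_le Y G d e))) _.
by rewrite !ge0_muleDr // addeACA -ge0_muleDl // -EFinD pval_addC mul1e.
Qed.

Lemma addpi_pmix (pi : state V -> R) p X Y :
  addpi pi (pmix p X Y) = pmix p (addpi pi X) (addpi pi Y).
Proof.
apply/funext => st; rewrite /addpi /pmix !muleDr ?fin_num_adde_defl // addeACA.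
by rewrite -!EFinM -EFinD -mulrDl pval_addC mul1r.
Qed.

End Combinators.

Section AtomicCommands.
Variables (V : finType) (R : realType).
Implicit Types (F G f g : fn V R) (C : prog V).

Definition atomic C : bool :=
  match C with
  | Assign _ _ | Alloc _ _ | Store _ _ | Lookup _ _ | Free _ => true
  | _ => false
  end.

Lemma ptv_ge0 l w (st : state V) : 0 <= ptv R l w st.
Proof. by rewrite /ptv; case: insub => [k|]; rewrite ?leey //; case: ifP. Qed.

Lemma ptany_ge0 l (st : state V) : 0 <= ptany R l st.
Proof. by rewrite /ptany; case: insub => [k|]; rewrite ?leey //; case: ifP. Qed.

Lemma ert_atomic_mono C F G : atomic C -> leF F G -> leF (ert C F) (ert C G).
Proof.
case: C => //= [x e|x e|e e'|x e|e] _ FG [s h] /=.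
- exact: FG.
- apply: ge_ereal_sup => _ [v _ <-].
  apply: le_trans (le_sepimp _ (fun h' => FG _)) _.
  by apply: ereal_sup_ubound; exists v.
- by apply: le_sepsum => h' //; apply: le_sepimp => h''; apply: FG.
- apply: le_ereal_inf_tmp => _ [v _ <-].
  apply: le_trans; first by apply: ereal_inf_lbound; exists v.
  by apply: le_sepsum => h' //; apply: le_sepimp => h''; apply: FG.
- by apply: le_sepsum => h' //; apply: FG.
Qed.

Lemma ert_atomic_ge0 C F : atomic C -> isRuntime F -> isRuntime (ert C F).
Proof.
case: C => //= [x e|x e|e e'|x e|e] _ F0 [s h] /=.
- exact: F0.
- by apply: le_trans (sepimp_ge0 _ _ _) _; apply: ereal_sup_ubound; exists 0%N.
- by apply: sepsum_ge0 => h'; rewrite ?ptany_ge0 ?sepimp_ge0.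
- apply: le_ereal_inf_tmp => _ [v _ <-].
  by apply: sepsum_ge0 => h'; rewrite ?ptv_ge0 ?sepimp_ge0.
- by apply: sepsum_ge0 => h'; rewrite ?ptany_ge0 ?F0.
Qed.

Lemma ert_atomic_frame C f g : atomic C -> isRuntime f -> isRuntime g ->
  (forall x, modv C x -> notin_vars x g) ->
  leF (ert C (sepsum f g)) (sepsum (ert C f) g).
Proof.
case: C => //= [x e|x e|e e'|x e|e] _ f0 g0 gfree [s h] /=.
- exact: (sepsum_upd_le f s (e s) h (gfree x (eqxx x))).
- apply: ge_ereal_sup => _ [v _ <-].
  apply: le_trans (le_sepimp _ (fun h' => sepsum_upd_le f _ v h' (gfree x (eqxx x)))) _.
  apply: le_trans (sepimp_sepsum_le _ _ (fun h' => g0 _)) _.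
  by apply: le_sepsum => h' //; apply: ereal_sup_ubound; exists v.
- by apply: sepsum_sepimp_frame => h'; rewrite ?ptany_ge0 ?g0.
- apply: le_trans _ (ereal_inf_sepsum_le _ (fun h' => g0 _)); last first.
    by move=> v h'; apply: sepsum_ge0 => h''; rewrite ?ptv_ge0 ?sepimp_ge0.
  apply: le_ereal_inf_tmp => _ [v _ <-].
  apply: le_trans; first by apply: ereal_inf_lbound; exists v.
  apply: le_trans (le_sepsum (fun=> lexx _)
    (fun h' => le_sepimp _ (fun h'' => sepsum_upd_le f _ v h'' (gfree x (eqxx x))))) _.
  by apply: sepsum_sepimp_frame => h'; rewrite ?ptv_ge0 ?g0.
- by apply: sepsumA_le => h'; rewrite ?ptany_ge0 ?f0 ?g0.
Qed.

End AtomicCommands.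

Section LeastFixedPoint.
Variables (V : finType) (R : realType).
Implicit Types (L : fn V R -> Prop) (phi : fn V R -> fn V R) (Y : fn V R).

Lemma lfp_in_le L phi Y : L Y -> leF (phi Y) Y -> leF (lfp_in L phi) Y.
Proof. by move=> LY phiY st; apply: ereal_inf_lbound; exists Y. Qed.

Lemma lfp_in_pre L phi : (forall X Y, leF X Y -> leF (phi X) (phi Y)) ->
  leF (phi (lfp_in L phi)) (lfp_in L phi).
Proof.
move=> phi_mono st; apply: le_ereal_inf_tmp => _ [Y [LY phiY] <-].
exact: le_trans (phi_mono _ _ (lfp_in_le LY phiY) st) (phiY st).
Qed.

Lemma lfp_in_inA (pi : state V -> R) phi : inA pi (lfp_in (inA pi) phi).
Proof. by move=> st; apply: le_ereal_inf_tmp => _ [Y [YA _] <-]. Qed.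

End LeastFixedPoint.

Section AmortizedRuntime.
Variables (V : finType) (R : realType) (pi : state V -> R).
Implicit Types (F G X Y f g : fn V R) (C : prog V) (b : bexp V).

Lemma addpiK : cancel (addpi pi) (subpi pi).
Proof. by move=> X; apply/funext => st; rewrite /addpi /subpi addeK. Qed.

Lemma subpiK : cancel (subpi pi) (addpi pi).
Proof. by move=> X; apply/funext => st; rewrite /addpi /subpi subeK. Qed.

Lemma addpi_ge0 X : inA pi X -> isRuntime (addpi pi X).
Proof. by move=> XA st; rewrite /addpi -leeBlDr // sub0e. Qed.

Lemma subpi_inA F : isRuntime F -> inA pi (subpi pi F).
Proof.
by move=> F0 st; rewrite /subpi -[X in X <= _]sub0e; exact: leeB (F0 st) (lexx _).
Qed.

Definition raert C F : fn V R := addpi pi (aert pi C (subpi pi F)).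

Lemma aertE C X : aert pi C X = subpi pi (raert C (addpi pi X)).
Proof. by rewrite /raert !addpiK. Qed.

Lemma raert_tick e F : raert (Tick e) F = (fun st => ((e st.1)%:R)%:E + F st).
Proof. by apply/funext => st; rewrite /raert /addpi /subpi /= EFinN -addeA subeK. Qed.

Lemma raert_atomic C F : atomic C -> raert C F = ert C F.
Proof. by case: C => //= *; rewrite /raert /= !subpiK. Qed.

Lemma raert_pchoice C1 p C2 F :
  raert (PChoice C1 p C2) F = pmix p (raert C1 F) (raert C2 F).
Proof. exact: addpi_pmix. Qed.

Lemma raert_ite b C1 C2 F : raert (Ite b C1 C2) F = iver b (raert C1 F) (raert C2 F).
Proof. by apply/funext => st; rewrite /raert /addpi /= /iver; case: ifP. Qed.

Lemma raert_seq C1 C2 F : raert (Seq C1 C2) F = raert C1 (raert C2 F).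
Proof. by rewrite /raert /= addpiK. Qed.

Lemma raert_mono C F G : leF F G -> leF (raert C F) (raert C G).
Proof.
elim: C F G => [e|x e|x e|e e'|x e|e|C1 IH1 p C2 IH2|b C1 IH1 C2 IH2|C1 IH1 C2 IH2|b C1 IH1]
  F G FG; try by rewrite !raert_atomic //; exact: ert_atomic_mono.
- by rewrite !raert_tick => st; apply: leeD2l.
- by rewrite !raert_pchoice; apply: le_pmix; [exact: IH1|exact: IH2].
- by rewrite !raert_ite; apply: le_iver; [exact: IH1|exact: IH2].
- by rewrite !raert_seq; apply: IH1; apply: IH2.
- move=> st; rewrite /raert /addpi /=; apply: leeD2r.
  apply: le_ereal_inf_tmp => _ [Y [YA YG] <-]; apply: ereal_inf_lbound.
  exists Y => //; split=> // st'; apply: le_trans (YG st').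
  by apply: le_iver _ (fun=> lexx _) _ st' => st''; apply: leeD2r.
Qed.

Lemma aert_mono C X Y : leF X Y -> leF (aert pi C X) (aert pi C Y).
Proof.
move=> XY st; rewrite !aertE; apply: leeD2r.
by apply: raert_mono => st'; apply: leeD2r.
Qed.

Lemma raert_ge0 C F : isRuntime F -> isRuntime (raert C F).
Proof.
elim: C F => [e|x e|x e|e e'|x e|e|C1 IH1 p C2 IH2|b C1 IH1 C2 IH2|C1 IH1 C2 IH2|b C1 IH1]
  F F0; try by rewrite raert_atomic //; exact: ert_atomic_ge0.
- by rewrite raert_tick => st; apply: adde_ge0; rewrite ?lee_fin ?ler0n ?F0.
- by rewrite raert_pchoice; apply: pmix_ge0; [exact: IH1|exact: IH2].
- by rewrite raert_ite => st; rewrite /iver; case: ifP => _; [exact: IH1|exact: IH2].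
- by rewrite raert_seq; apply: IH1; apply: IH2.
- exact/addpi_ge0/lfp_in_inA.
Qed.

Lemma raert_while_pre b C1 F :
  leF (iver b (raert C1 (raert (While b C1) F)) F) (raert (While b C1) F).
Proof.
have phi_mono X Y : leF X Y ->
    leF (iver b (aert pi C1 X) (subpi pi F)) (iver b (aert pi C1 Y) (subpi pi F)).
  by move=> XY; apply: le_iver _ (aert_mono C1 XY) (fun=> lexx _).
move=> st; have := lfp_in_pre (inA pi) phi_mono st.
rewrite /raert /= addpiK /addpi /iver; case: ifP => _; first exact: leeD2r.
by rewrite /subpi leeBlDr.
Qed.

Lemma raert_while_least b C1 F Y : isRuntime Y ->
  leF (iver b (raert C1 Y) F) Y -> leF (raert (While b C1) F) Y.
Proof.
move=> Y0 YF st; rewrite -(subpiK Y) /raert /addpi /=; apply: leeD2r.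
apply: lfp_in_le (subpi_inA Y0) _ st => st'; have := YF st'.
rewrite /iver /raert /addpi /subpi; case: ifP => _ YFst; first by rewrite leeBrDr.
exact: leeD2r.
Qed.

Lemma notin_modvU g C1 C2 :
  (forall x, modv C1 x || modv C2 x -> notin_vars x g) ->
  (forall x, modv C1 x -> notin_vars x g) /\ (forall x, modv C2 x -> notin_vars x g).
Proof. by move=> gfree; split=> x Cx; apply: gfree; rewrite Cx ?orbT. Qed.

Lemma raert_frame C f g : isRuntime f -> isRuntime g ->
  (forall x, modv C x -> notin_vars x g) ->
  leF (raert C (sepsum f g)) (sepsum (raert C f) g).
Proof.
move=> + g0; elim: C f
  => [e|x e|x e|e e'|x e|e|C1 IH1 p C2 IH2|b C1 IH1 C2 IH2|C1 IH1 C2 IH2|b C1 IH1] f f0 gfree;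
  try by rewrite !raert_atomic //; exact: ert_atomic_frame.
- by rewrite !raert_tick; apply: (addl_sepsum_le (fun s => ((e s)%:R)%:E)).
- case/notin_modvU: gfree => gfree1 gfree2; rewrite !raert_pchoice => st.
  apply: le_trans (le_pmix _ (IH1 f f0 gfree1) (IH2 f f0 gfree2) st) _.
  by apply: pmix_sepsum_le => //; apply: raert_ge0.
- case/notin_modvU: gfree => gfree1 gfree2; rewrite !raert_ite iver_sepsum.
  by apply: le_iver; [exact: IH1|exact: IH2].
- case/notin_modvU: gfree => gfree1 gfree2; rewrite !raert_seq => st.
  apply: le_trans (raert_mono C1 (IH2 f f0 gfree2) st) _.
  by apply: IH1 => //; apply: raert_ge0.
- have Wf0 := raert_ge0 (While b C1) f0.
  apply: raert_while_least => [st|st].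
    by apply: sepsum_ge0 => h; rewrite ?Wf0 ?g0.
  apply: le_trans (le_iver _ (IH1 _ Wf0 gfree) (fun=> lexx _) st) _.
  by rewrite -iver_sepsum; apply: le_sepsum => h //; apply: raert_while_pre.
Qed.

End AmortizedRuntime.

Theorem mainTheorem5 (V : finType) (R : realType) (pi : state V -> R)
    (C : prog V) (f g : fn V R) :
  (forall st, (0 <= pi st)%R) ->
  isRuntime f -> isRuntime g ->
  (forall x, modv C x -> notin_vars x g) ->
  leF (aert pi C (subpi pi (sepsum f g)))
      (subpi pi (sepsum (addpi pi (aert pi C (subpi pi f))) g)).
Proof.
move=> _ f0 g0 gfree st.
apply: le_trans _ (leeD2r (- (pi st)%:E) (raert_frame pi f0 g0 gfree st)).
by rewrite /raert /addpi addeK.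
Qed.
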